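(* Consider, in the Cartesian plane, two attackers $A1$, $A2$ and two targets $T1$, $T2$, each moving with constant speed along a straight line. The attackers have equal speed $v_{A1}=v_{A2}$, the targets have equal speed $v_{T1}=v_{T2}$, and the targets are slower than the attackers. The coordinate frame is chosen so that the $x$-axis is the line through the positions of $A1$ and $A2$ and the $y$-axis is the perpendicular bisector of the segment $\overline{A1A2}$; in particular $y_{A1}=y_{A2}=0$. Attacker $A1$ pursues $T1$ and $A2$ pursues $T2$, with $x_{T1}>0$ and $x_{T2}<0$. Let $\gamma_{A2T2}=v_{T2}/v_{A2}$ and let the $A2$–$T2$ Apollonius circle be the circle with center $$\left(\frac{x_{T2}-\gamma_{A2T2}^2x_{A2}}{1-\gamma_{A2T2}^2},\ \frac{y_{T2}}{1-\gamma_{A2T2}^2}\right)$$ and radius $$\frac{\gamma_{A2T2}\sqrt{(x_{T2}-x_{A2})^2+y_{T2}^2}}{1-\gamma_{A2T2}^2}.$$ Then the attacker $A1$ will collide with the attacker $A2$ only if the $A2$–$T2$ Apollonius circle intercepts the $y$-axis.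
   Context: This is a pursuit–evasion game between two targets and two attackers. Each attacker individually pursues its designated target, and the two targets cooperate to try to make the attackers collide with each other. The $A2$–$T2$ Apollonius circle is the locus of points that $A2$ and $T2$ can reach simultaneously when both move at constant speed in straight lines. The $y$-axis of the chosen frame is the locus of points that $A1$ and $A2$ can reach simultaneously. *)

From Stdlib Require Import Reals Lra.
Open Scope R_scope.

Definition moving (p0 : R * R) (s : R) (u : R * R) (t : R) : R * R :=
  (fst p0 + s * t * fst u, snd p0 + s * t * snd u).

Definition unit_dir (u : R * R) : Prop := fst u ^ 2 + snd u ^ 2 = 1.

Definition gamma (vT vA : R) : R := vT / vA.

(* Center and radius of the A-T Apollonius circle (A on the x-axis at xA). *)
Definition apollo_center (xA xT yT g : R) : R * R :=
  ((xT - g ^ 2 * xA) / (1 - g ^ 2), yT / (1 - g ^ 2)).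

Definition apollo_radius (xA xT yT g : R) : R :=
  g * sqrt ((xT - xA) ^ 2 + yT ^ 2) / (1 - g ^ 2).

Definition meets_y_axis (c : R * R) (r : R) : Prop :=
  exists y : R, (0 - fst c) ^ 2 + (y - snd c) ^ 2 = r ^ 2.

(* The Apollonius disc of A2 and T2 is the set of points P with
   |P T2| <= gamma |P A2|; it is convex, contains T2 (where x < 0) and also
   the point I where A2 captures T2.  Since the attackers are symmetric about
   the y-axis and equally fast, they can only meet on the y-axis, and A2
   reaches that meeting point before I, so I lies in the half-plane x >= 0.
   Hence the segment [T2, I] crosses the y-axis inside the disc. *)

From Stdlib Require Import Reals.
From Stdlib Require Import Lra Psatz.
Open Scope R_scope.

Definition sqdist (P Q : R * R) : R :=
  (fst P - fst Q) ^ 2 + (snd P - snd Q) ^ 2.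

Definition circle_power (c : R * R) (r : R) (P : R * R) : R :=
  sqdist P c - r ^ 2.

Definition lerp (P Q : R * R) (l : R) : R * R :=
  (fst P + l * (fst Q - fst P), snd P + l * (snd Q - snd P)).

Lemma circle_power_lerp (c : R * R) (r : R) (P Q : R * R) (l : R) :
  circle_power c r (lerp P Q l) =
  (1 - l) * circle_power c r P + l * circle_power c r Q
  - l * (1 - l) * sqdist P Q.
Proof. unfold circle_power, sqdist, lerp; cbn [fst snd]; ring. Qed.

Lemma circle_power_lerp_nonpos (c : R * R) (r : R) (P Q : R * R) (l : R) :
  circle_power c r P <= 0 -> circle_power c r Q <= 0 -> 0 <= l <= 1 ->
  circle_power c r (lerp P Q l) <= 0.
Proof.
  intros HP HQ Hl.
  rewrite circle_power_lerp.
  assert (0 <= sqdist P Q)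
    by (apply Rplus_le_le_0_compat; apply pow2_ge_0).
  assert (0 <= l * (1 - l)) by nra.
  nra.
Qed.

Lemma meets_y_axis_of_power_nonpos (c : R * R) (r y : R) :
  circle_power c r (0, y) <= 0 -> meets_y_axis c r.
Proof.
  unfold circle_power, sqdist, meets_y_axis; cbn [fst snd]; intros Hy.
  assert (Hrad : 0 <= r ^ 2 - (0 - fst c) ^ 2)
    by (pose proof (pow2_ge_0 (y - snd c)); lra).
  exists (snd c + sqrt (r ^ 2 - (0 - fst c) ^ 2)).
  replace (snd c + sqrt (r ^ 2 - (0 - fst c) ^ 2) - snd c)
    with (sqrt (r ^ 2 - (0 - fst c) ^ 2)) by ring.
  rewrite <- Rsqr_pow2 with (x := sqrt _), Rsqr_sqrt by exact Hrad.
  ring.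
Qed.

Lemma apollo_power (xA xT yT g : R) (P : R * R) :
  1 - g ^ 2 <> 0 ->
  (1 - g ^ 2) * circle_power (apollo_center xA xT yT g)
                             (apollo_radius xA xT yT g) P =
  sqdist P (xT, yT) - g ^ 2 * sqdist P (xA, 0).
Proof.
  intros Hk.
  assert (Hr : apollo_radius xA xT yT g ^ 2 =
               g ^ 2 * ((xT - xA) ^ 2 + yT ^ 2) / (1 - g ^ 2) ^ 2).
  { unfold apollo_radius, Rdiv.
    rewrite !Rpow_mult_distr, <- (Rsqr_pow2 (sqrt _)), Rsqr_sqrt
      by (apply Rplus_le_le_0_compat; apply pow2_ge_0).
    rewrite pow_inv; ring. }
  unfold circle_power, sqdist; rewrite Hr.
  unfold apollo_center; cbn [fst snd].
  field; exact Hk.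
Qed.

Lemma apollo_power_nonpos (xA xT yT g : R) (P : R * R) :
  0 < 1 - g ^ 2 ->
  sqdist P (xT, yT) <= g ^ 2 * sqdist P (xA, 0) ->
  circle_power (apollo_center xA xT yT g) (apollo_radius xA xT yT g) P <= 0.
Proof.
  intros Hk HP.
  apply (Rmult_le_reg_l (1 - g ^ 2)); [exact Hk |].
  rewrite apollo_power by lra.
  lra.
Qed.

Lemma sqdist_moving (p u : R * R) (s t : R) :
  unit_dir u -> sqdist (moving p s u t) p = (s * t) ^ 2.
Proof.
  destruct u as [ux uy]; unfold unit_dir, sqdist, moving; cbn [fst snd]; intros Hu.
  replace ((s * t) ^ 2) with ((s * t) ^ 2 * (ux ^ 2 + uy ^ 2)) by (rewrite Hu; ring).
  ring.
Qed.

Lemma interception_sqdist (A T uA uT : R * R) (vA vT tau : R) :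
  vA <> 0 -> unit_dir uA -> unit_dir uT ->
  moving A vA uA tau = moving T vT uT tau ->
  sqdist (moving A vA uA tau) T = gamma vT vA ^ 2 * sqdist (moving A vA uA tau) A.
Proof.
  intros HvA HuA HuT Hcap.
  rewrite (sqdist_moving A uA) by exact HuA.
  rewrite Hcap, (sqdist_moving T uT) by exact HuT.
  unfold gamma; field; exact HvA.
Qed.

Lemma collision_on_y_axis (a v t : R) (u1 u2 : R * R) :
  a <> 0 -> unit_dir u1 -> unit_dir u2 ->
  moving (a, 0) v u1 t = moving (- a, 0) v u2 t ->
  fst (moving (- a, 0) v u2 t) = 0.
Proof.
  destruct u1 as [p1 q1], u2 as [p2 q2].
  unfold unit_dir, moving; cbn [fst snd].
  intros Ha Hu1 Hu2 Hcol; injection Hcol as Hx Hy.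
  assert (Hvt : v * t <> 0).
  { intros H0; rewrite H0 in Hx; lra. }
  assert (Hq : q1 = q2) by (apply (Rmult_eq_reg_l (v * t)); lra).
  assert (Hp : (p1 - p2) * (p1 + p2) = 0) by (subst q2; lra).
  destruct (Rmult_integral _ _ Hp) as [Hsame | Hopp].
  - replace p1 with p2 in Hx by lra; lra.
  - replace p1 with (- p2) in Hx by lra; lra.
Qed.

Lemma fst_moving_nonneg_after_crossing (p u : R * R) (s t t' : R) :
  fst p < 0 -> fst (moving p s u t) = 0 -> 0 <= t <= t' ->
  0 <= fst (moving p s u t').
Proof.
  unfold moving; cbn [fst snd]; intros Hp Hcross Ht.
  assert (Hsu : 0 < s * fst u) by nra.
  nra.
Qed.

Lemma lerp_crosses_y_axis (P Q : R * R) :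
  fst P < 0 <= fst Q -> exists l, 0 <= l <= 1 /\ fst (lerp P Q l) = 0.
Proof.
  intros [HP HQ].
  set (l := - fst P / (fst Q - fst P)).
  assert (Hl : l * (fst Q - fst P) = - fst P) by (unfold l; field; lra).
  exists l; unfold lerp; cbn [fst].
  split; [split; nra | lra].
Qed.

Theorem lemma3 (a vA vT xT1 yT1 xT2 yT2 : R) (uA1 uA2 uT1 uT2 : R * R)
  (tau1 tau2 : R) :
  0 < a ->                      (* A1 = (a,0), A2 = (-a,0) *)
  0 < vT -> vT < vA ->          (* equal attacker speeds vA, equal target speeds vT *)
  0 < xT1 -> xT2 < 0 ->
  unit_dir uA1 -> unit_dir uA2 -> unit_dir uT1 -> unit_dir uT2 ->
  0 < tau1 -> 0 < tau2 ->
  (* A1 pursues T1: straight-line interception at time tau1 *)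
  moving (a, 0) vA uA1 tau1 = moving (xT1, yT1) vT uT1 tau1 ->
  (* A2 pursues T2: straight-line interception at time tau2 *)
  moving (- a, 0) vA uA2 tau2 = moving (xT2, yT2) vT uT2 tau2 ->
  (* A1 collides with A2 at time t, before either capture *)
  forall t : R, 0 <= t -> t <= tau1 -> t <= tau2 ->
  moving (a, 0) vA uA1 t = moving (- a, 0) vA uA2 t ->
  meets_y_axis (apollo_center (- a) xT2 yT2 (gamma vT vA))
               (apollo_radius (- a) xT2 yT2 (gamma vT vA)).
Proof.
  intros Ha HvT HvA _ HxT2 HuA1 HuA2 _ HuT2 _ _ _ Hcap2 t Ht _ Htau2 Hcol.
  set (g := gamma vT vA).
  assert (Hk : 0 < 1 - g ^ 2).
  { assert (Hg : g * vA = vT) by (unfold g, gamma; field; lra).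
    assert (0 < g < 1) by (split; nra).
    nra. }
  set (I := moving (- a, 0) vA uA2 tau2).
  assert (HI : 0 <= fst I).
  { apply (fst_moving_nonneg_after_crossing _ _ _ t); cbn [fst]; try lra.
    apply (collision_on_y_axis a _ _ uA1); auto; lra. }
  assert (HT2in : circle_power (apollo_center (- a) xT2 yT2 g)
                    (apollo_radius (- a) xT2 yT2 g) (xT2, yT2) <= 0).
  { apply apollo_power_nonpos; [exact Hk |].
    unfold sqdist; cbn [fst snd].
    assert (0 <= g ^ 2 * ((xT2 - - a) ^ 2 + (yT2 - 0) ^ 2))
      by (apply Rmult_le_pos; [| apply Rplus_le_le_0_compat]; apply pow2_ge_0).
    lra. }
  assert (HIin : circle_power (apollo_center (- a) xT2 yT2 g)
                   (apollo_radius (- a) xT2 yT2 g) I <= 0).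
  { apply apollo_power_nonpos; [exact Hk |].
    right; apply (interception_sqdist _ _ _ uT2); auto; lra. }
  destruct (lerp_crosses_y_axis (xT2, yT2) I) as [l [Hl Hcross]];
    [cbn [fst]; lra |].
  pose proof (circle_power_lerp_nonpos _ _ _ _ _ HT2in HIin Hl) as HQin.
  destruct (lerp (xT2, yT2) I l) as [qx qy]; cbn [fst] in Hcross; subst qx.
  exact (meets_y_axis_of_power_nonpos _ _ qy HQin).
Qed.
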